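(* Let $\mathfrak{P}=(\rho_{t_0},\mathcal{E}_{t_1\leftarrow t_0},\dots,\mathcal{E}_{t_n\leftarrow t_{n-1}})$ be a multi-time quantum process with $\mathcal{H}_{t_k}=\mathbb{C}^d$, and let $\overrightarrow{\Upsilon}_{t_k\cdots t_0}$ denote the right KD temporal state of the process truncated at time $t_k$. Then $\overrightarrow{\Upsilon}_{t_0}=\rho_{t_0}$ and, for $k=1,\dots,n$, $$\overrightarrow{\Upsilon}_{t_k\cdots t_0}=J[\mathcal{E}_{t_k\leftarrow t_{k-1}}]\star\overrightarrow{\Upsilon}_{t_{k-1}\cdots t_0};$$ that is, $\overrightarrow{\Upsilon}_{t_n\cdots t_0}=J[\mathcal{E}_{t_n\leftarrow t_{n-1}}]\star(\cdots\star(J[\mathcal{E}_{t_1\leftarrow t_0}]\star\rho_{t_0})\cdots)$.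
   Context: A multi-time quantum process consists of a density operator $\rho_{t_0}$ on $\mathbb{C}^d$ and CPTP maps $\mathcal{E}_{t_j\leftarrow t_{j-1}}$ on $\mathbf{B}(\mathbb{C}^d)$, extended linearly to all operators. For complete families of orthogonal projectors at each time, the right temporal KD distribution is $\overrightarrow{Q}_{\rm KD}(b_n,\dots,b_0)=\operatorname{Tr}[\mathcal{E}_{t_n\leftarrow t_{n-1}}(\cdots\mathcal{E}_{t_1\leftarrow t_0}(\rho_{t_0}\Pi^{t_0}_{b_0})\Pi^{t_1}_{b_1}\cdots)\Pi^{t_n}_{b_n}]$. Let $\sigma_0=\mathbb{I},\sigma_1,\dots,\sigma_{d^2-1}$ be Hermitian operators on $\mathbb{C}^d$ with $\operatorname{Tr}\sigma_j=0$ ($j\ge1$) and $\operatorname{Tr}(\sigma_\mu\sigma_\nu)=d\,\delta_{\mu\nu}$; measuring each $\sigma_\mu$ via its spectral projectors with eigenvalue outcomes, set $\overrightarrow{T}^{\mu_n,\dots,\mu_0}=\sum a_n\cdots a_0\,\overrightarrow{Q}_{\rm KD}(a_n,\dots,a_0\mid\sigma_{\mu_n},\dots,\sigma_{\mu_0})$ and define the right KD temporal state $\overrightarrow{\Upsilon}_{t_n\cdots t_0}=d^{-(n+1)}\sum_\mu\overrightarrow{T}^{\mu_n,\dots,\mu_0}\sigma_{\mu_n}\otimes\cdots\otimes\sigma_{\mu_0}$ on $\mathcal{H}_{t_n}\otimes\cdots\otimes\mathcal{H}_{t_0}$. For $M\in\mathbf{B}(\mathcal{H}_B\otimes\mathcal{H}_A)$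 and $N\in\mathbf{B}(\mathcal{H}_C\otimes\mathcal{H}_B)$, $N\star M:=(N_{CB}\otimes\mathbb{I}_A)(\mathbb{I}_C\otimes M_{BA})$ (with $\mathcal{H}_A$ possibly trivial, so $N\star\rho=N(\mathbb{I}_C\otimes\rho)$ for $\rho\in\mathbf{B}(\mathcal{H}_B)$). The Jamiołkowski operator of a channel $\mathcal{E}:\mathbf{B}(\mathcal{H}_{t_{i-1}})\to\mathbf{B}(\mathcal{H}_{t_i})$ is $J[\mathcal{E}]=\sum_{k,l}\mathcal{E}(|k\rangle\langle l|)\otimes|l\rangle\langle k|\in\mathbf{B}(\mathcal{H}_{t_i}\otimes\mathcal{H}_{t_{i-1}})$. *)

From HB Require Import structures.
From mathcomp Require Import all_boot all_order all_algebra.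
From mathcomp Require Import mxtens.
Set Implicit Arguments. Unset Strict Implicit. Unset Printing Implicit Defensive.
Import Order.TTheory GRing.Theory Num.Theory.
Local Open Scope ring_scope.

(* Complex scalars: an arbitrary numeric algebraically closed field C
   (e.g. the complex numbers); operators on C^d are 'M[C]_d. *)
Section Defs.
Variable C : numClosedFieldType.

Definition adjm m n (A : 'M[C]_(m, n)) : 'M[C]_(n, m) := map_mx Num.conj A^T.

Definition hermitian n (A : 'M[C]_n) : Prop := adjm A = A.

Definition psd n (A : 'M[C]_n) : Prop :=
  hermitian A /\ forall v : 'cV[C]_n, 0 <= (adjm v *m A *m v) 0 0.

Definition density n (rho : 'M[C]_n) : Prop := psd rho /\ \tr rho = 1.

Definition cptp n (E : 'M[C]_n -> 'M[C]_n) : Prop :=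
  exists K : seq 'M[C]_n,
    (forall X, E X = \sum_(k <- K) k *m X *m adjm k) /\
    \sum_(k <- K) adjm k *m k = 1%:M.

Definition orth_proj n (P : 'M[C]_n) : Prop := P *m P = P /\ hermitian P.

Definition spectral_decomp n (A : 'M[C]_n) (s : seq (C * 'M[C]_n)) : Prop :=
  [/\ uniq (map fst s),
      forall i, (i < size s)%N -> orth_proj (nth (0, 0) s i).2 /\
                                 (nth (0, 0) s i).2 != 0,
      forall i j, (i < size s)%N -> (j < size s)%N -> i != j ->
                  (nth (0, 0) s i).2 *m (nth (0, 0) s j).2 = 0,
      \sum_(x <- s) x.2 = 1%:M &
      A = \sum_(x <- s) x.1 *: x.2].

Definition op_basis d (sigma : 'I_(d * d) -> 'M[C]_d) : Prop :=
  [/\ forall mu, val mu = 0%N -> sigma mu = 1%:M,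
      forall mu, hermitian (sigma mu),
      forall mu, val mu != 0%N -> \tr (sigma mu) = 0 &
      forall mu nu, \tr (sigma mu *m sigma nu) = d%:R * (mu == nu)%:R].

Fixpoint dpow (d k : nat) : nat := if k is k'.+1 then (d * dpow d k')%N else 1%N.

(* tens d k f = f (k-1) (x) ... (x) f 0 (x) [1]  on C^d (x) ... (x) C^d *)
Fixpoint tens d (k : nat) (f : nat -> 'M[C]_d) : 'M[C]_(dpow d k) :=
  if k is k'.+1 then tensmx (f k') (tens k' f) else 1%:M.

Definition jam d (E : 'M[C]_d -> 'M[C]_d) : 'M[C]_(d * d) :=
  \sum_(k < d) \sum_(l < d) tensmx (E (delta_mx k l)) (delta_mx l k).

Definition star c b a (N : 'M[C]_(c * b)) (M : 'M[C]_(b * a)) : 'M[C]_(c * (b * a)) :=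
  castmx (esym (mulnA c b a), esym (mulnA c b a)) (tensmx N (1%:M : 'M[C]_a))
  *m tensmx (1%:M : 'M[C]_c) M.

Definition cart T (ls : seq (seq T)) : seq (seq T) :=
  foldr (fun l acc => [seq x :: y | x <- l, y <- acc]) [:: [::]] ls.

Fixpoint kd_evolve d (E : nat -> 'M[C]_d -> 'M[C]_d) (j : nat) (X : 'M[C]_d)
  (Ps : seq 'M[C]_d) : 'M[C]_d :=
  if Ps is P :: Ps' then kd_evolve E j.+1 (E j X *m P) Ps' else X.

(* right temporal KD quasiprobability for projectors Ps = [:: P_0; ...; P_k]:
   Tr[E_k( ... E_1(rho P_0) P_1 ... ) P_k] *)
Definition QKD d (rho : 'M[C]_d) (E : nat -> 'M[C]_d -> 'M[C]_d) (Ps : seq 'M[C]_d) : C :=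
  if Ps is P0 :: Ps' then \tr (kd_evolve E 1 (rho *m P0) Ps') else 0.

(* T^{mu_k,...,mu_0}, with ms = [:: mu_0; ...; mu_k] and spec mu the spectral
   decomposition (eigenvalue, projector) of sigma_mu:
   sum over outcomes of a_k ... a_0 Q_KD(a_k, ..., a_0) *)
Definition Tcoef d (rho : 'M[C]_d) (E : nat -> 'M[C]_d -> 'M[C]_d)
  (spec : 'I_(d * d) -> seq (C * 'M[C]_d)) (ms : seq 'I_(d * d)) : C :=
  \sum_(s <- cart [seq spec m | m <- ms])
     (\prod_(x <- s) x.1) * QKD rho E [seq x.2 | x <- s].

(* right KD temporal state of the process truncated at time t_k,
   an operator on H_{t_k} (x) ... (x) H_{t_0} *)
Definition KDstate d (rho : 'M[C]_d) (E : nat -> 'M[C]_d -> 'M[C]_d)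
  (sigma : 'I_(d * d) -> 'M[C]_d) (spec : 'I_(d * d) -> seq (C * 'M[C]_d))
  (k : nat) : 'M[C]_(dpow d k.+1) :=
  ((d%:R : C) ^+ k.+1)^-1 *:
    \sum_(mu : {ffun 'I_k.+1 -> 'I_(d * d)})
       Tcoef rho E spec [seq mu i | i <- enum 'I_k.+1] *:
       tens k.+1 (fun j => sigma (mu (inord j))).

End Defs.

From HB Require Import structures.
From mathcomp Require Import all_boot all_order all_algebra.
From mathcomp Require Import mxtens zify.
Set Implicit Arguments. Unset Strict Implicit. Unset Printing Implicit Defensive.
Import Order.TTheory GRing.Theory Num.Theory.
Local Open Scope ring_scope.

(* An operator on H_{t_k} (x) ... (x) H_{t_0} is determined by its traces against the
   products sigma_{nu_k} (x) ... (x) sigma_{nu_0}, because the sigma_mu form an operator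
   basis.  By orthogonality of the sigma_mu, these traces of the KD temporal state are
   Tr[E_k(... E_1(rho sigma_{nu_0}) sigma_{nu_1} ...) sigma_{nu_k}]: the spectral
   decompositions and the linearity of the channels collapse the sum over eigenvalue
   outcomes defining T^nu into this single expression.  On the other side, the link
   product with J[E] pushes the newest time slot through E: if the traces of M against
   A (x) B are Tr[Z A], then those of J[E] * M against A' (x) A (x) B are Tr[E(Z A) A'].
   Hence both sides of the recursion have the same traces. *)

Lemma linear_sumZ (R : pzRingType) (U V : lmodType R) (f : U -> V) :
  linear f -> forall I (r : seq I) (c : I -> R) (F : I -> U),
  f (\sum_(i <- r) c i *: F i) = \sum_(i <- r) c i *: f (F i).
Proof.
move=> f_lin I r c F; elim: r => [|i r IH]; last by rewrite !big_cons f_lin IH.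
rewrite !big_nil; have := f_lin 1 0 0.
by rewrite !scale1r addr0 -{1}[f 0]addr0 => /addrI <-.
Qed.

Section TensorProduct.
Variable R : pzRingType.

Lemma big_mxtens_index (V : nmodType) m n (F : 'I_(m * n) -> V) :
  \sum_(P < m * n) F P = \sum_(i < m) \sum_(j < n) F (mxtens_index (i, j)).
Proof.
rewrite pair_big (reindex (@mxtens_index m n)) //=.
  by apply: eq_bigr => -[i j].
by exists (@mxtens_unindex m n) => P _; rewrite (mxtens_indexK, mxtens_unindexK).
Qed.

Lemma tensmxA a b c (A : 'M[R]_a) (B : 'M[R]_b) (D : 'M[R]_c) :
  castmx (esym (mulnA a b c), esym (mulnA a b c)) ((A *t B) *t D) = A *t (B *t D).
Proof.
have castE i j k :
    cast_ord (esym (esym (mulnA a b c))) (mxtens_index (i, mxtens_index (j, k)))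
    = mxtens_index (mxtens_index (i, j), k).
  by apply: val_inj; rewrite /= mulnDl -mulnA addnA.
apply/matrixP => P Q.
case: (mxtens_indexP P) => i P'; case: (mxtens_indexP P') => j k.
case: (mxtens_indexP Q) => i' Q'; case: (mxtens_indexP Q') => j' k'.
by rewrite castmxE !castE !tensmxE mulrA.
Qed.

Lemma tensmx_suml m n p q I (r : seq I) (F : I -> 'M[R]_(m, n)) (B : 'M[R]_(p, q)) :
  (\sum_(i <- r) F i) *t B = \sum_(i <- r) F i *t B.
Proof.
apply/matrixP => P Q; rewrite mxE !summxE mulr_suml.
by apply: eq_bigr => i _; rewrite !mxE.
Qed.

Lemma tensmxZl m n p q (a : R) (A : 'M[R]_(m, n)) (B : 'M[R]_(p, q)) :
  (a *: A) *t B = a *: (A *t B).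
Proof. by apply/matrixP => P Q; rewrite !mxE mulrA. Qed.

Lemma mxtrace_tensmx m n (A : 'M[R]_m) (B : 'M[R]_n) : \tr (A *t B) = \tr A * \tr B.
Proof. by rewrite /mxtrace mulr_sum; apply: eq_bigr => P _; rewrite mxE. Qed.

Lemma mxtrace_sum n I (r : seq I) (F : I -> 'M[R]_n) :
  \tr (\sum_(i <- r) F i) = \sum_(i <- r) \tr (F i).
Proof. exact: raddf_sum. Qed.

Lemma castmx_sum m m' n n' (e : (m = m') * (n = n')) I (r : seq I)
    (F : I -> 'M[R]_(m, n)) :
  castmx e (\sum_(i <- r) F i) = \sum_(i <- r) castmx e (F i).
Proof.
apply/matrixP => i j; rewrite castmxE !summxE.
by apply: eq_bigr => k _; rewrite castmxE.
Qed.

Lemma castmx_mulmx m m' (e : m = m') (A B : 'M[R]_m) :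
  castmx (e, e) A *m castmx (e, e) B = castmx (e, e) (A *m B).
Proof. by case: m' / e. Qed.

Lemma mxtrace_castmx m m' (e : m = m') (A : 'M[R]_m) : \tr (castmx (e, e) A) = \tr A.
Proof. by case: m' / e. Qed.

Lemma mxtrace_mul_delta n (A : 'M[R]_n) i j : \tr (A *m delta_mx i j) = A j i.
Proof.
rewrite /mxtrace (bigD1 j) //= big1 => [|k /negbTE kj].
  rewrite mxE (bigD1 i) //= big1 => [|k /negbTE ki]; first by rewrite mxE !eqxx mulr1 !addr0.
  by rewrite mxE ki mulr0.
by rewrite mxE big1 // => l _; rewrite mxE kj andbF mulr0.
Qed.

Lemma tensmx_delta m n (i j : 'I_m) (k l : 'I_n) :
  delta_mx i j *t delta_mx k l
  = delta_mx (mxtens_index (i, k)) (mxtens_index (j, l)) :> 'M[R]_(m * n).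
Proof.
apply/matrixP => P Q.
case: (mxtens_indexP P) => i' k'; case: (mxtens_indexP Q) => j' l'.
rewrite tensmxE !mxE !(inj_eq (can_inj (@mxtens_indexK _ _))) !xpair_eqE.
by rewrite -natrM mulnb andbACA.
Qed.

Definition ptrace1 m n (Y : 'M[R]_(m * n)) : 'M[R]_n :=
  \matrix_(p, q) \sum_(i < m) Y (mxtens_index (i, p)) (mxtens_index (i, q)).

Lemma mxtrace_ptrace1 m n (Y : 'M[R]_(m * n)) (B : 'M[R]_n) :
  \tr (Y *m (1%:M *t B)) = \tr (ptrace1 Y *m B).
Proof.
have diagE i p : (Y *m (1%:M *t B)) (mxtens_index (i, p)) (mxtens_index (i, p))
    = \sum_q Y (mxtens_index (i, p)) (mxtens_index (i, q)) * B q p.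
  rewrite mxE big_mxtens_index (bigD1 i) //= [X in _ + X]big1 ?addr0 => [|j /negbTE ji].
    by apply: eq_bigr => q _; rewrite tensmxE mxE eqxx mul1r.
  by rewrite big1 // => q _; rewrite tensmxE mxE ji mul0r mulr0.
rewrite /mxtrace big_mxtens_index exchange_big /=; apply: eq_bigr => p _.
under eq_bigr => i _ do rewrite diagE.
rewrite mxE exchange_big /=; apply: eq_bigr => q _.
by rewrite mxE mulr_suml.
Qed.

End TensorProduct.

Lemma cptp_linear (C : numClosedFieldType) n (f : 'M[C]_n -> 'M[C]_n) : cptp f -> linear f.
Proof.
case=> K [fK _] a X Y; rewrite !fK scaler_sumr -big_split /=.
by apply: eq_bigr => k _; rewrite mulmxDr mulmxDl -scalemxAr -scalemxAl.
Qed.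

Section TensorPower.
Variables (C : numClosedFieldType) (d : nat).

Lemma eq_tens k (f g : nat -> 'M[C]_d) :
  (forall j, (j < k)%N -> f j = g j) -> tens k f = tens k g.
Proof.
elim: k => //= k IH fg; rewrite fg // IH // => j jk; exact/fg/ltnW.
Qed.

Lemma mulmx_tens k (f g : nat -> 'M[C]_d) :
  tens k f *m tens k g = tens k (fun j => f j *m g j).
Proof. by elim: k => [|k IH] /=; rewrite ?mulmx1 // tensmx_mul IH. Qed.

Lemma mxtrace_tens k (f : nat -> 'M[C]_d) : \tr (tens k f) = \prod_(j < k) \tr (f j).
Proof.
elim: k => [|k IH] /=; first by rewrite mxtrace1 big_ord0.
by rewrite mxtrace_tensmx IH big_ord_recr /= mulrC.
Qed.

End TensorPower.

Section LinkProduct.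
Variables (C : numClosedFieldType) (d : nat).

Lemma mxtrace_star_jam m (F : 'M[C]_d -> 'M[C]_d) (M : 'M[C]_(d * m)) (B : 'M[C]_m)
    (Z : 'M[C]_d) :
  linear F -> (forall A, \tr (M *m (A *t B)) = \tr (Z *m A)) ->
  forall A A', \tr (star (jam F) M *m (A' *t (A *t B))) = \tr (F (Z *m A) *m A').
Proof.
move=> F_lin MZ A A'.
have termE i j : \tr (castmx (esym (mulnA d d m), esym (mulnA d d m))
      ((F (delta_mx i j) *t delta_mx j i) *t 1%:M) *m (1%:M *t M) *m (A' *t (A *t B)))
    = (Z *m A) i j * \tr (F (delta_mx i j) *m A').
  rewrite tensmxA !tensmx_mul mulmx1 mxtrace_tensmx mulrC; congr (_ * _).
  by rewrite -mulmxA mxtrace_mulC -mulmxA tensmx_mul mulmx1 MZ mulmxA mxtrace_mul_delta.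
rewrite [Z *m A]matrix_sum_delta pair_big linear_sumZ // mulmx_suml mxtrace_sum.
rewrite /star /jam pair_big tensmx_suml castmx_sum !mulmx_suml mxtrace_sum.
by apply: eq_bigr => -[i j] _ /=; rewrite termE -scalemxAl mxtraceZ.
Qed.

End LinkProduct.

Lemma size_cart (T : eqType) (ls : seq (seq T)) s : s \in cart ls -> size s = size ls.
Proof.
elim: ls s => [|l ls IH] s /=; first by rewrite inE => /eqP->.
by case/allpairsPdep => x [y [_ /IH <- ->]].
Qed.

Section Locality.
Variables (C : numClosedFieldType) (d : nat) (F G : nat -> 'M[C]_d -> 'M[C]_d).

Lemma eq_kd_evolve j X Ps :
  (forall i, (j <= i < j + size Ps)%N -> F i = G i) ->
  kd_evolve F j X Ps = kd_evolve G j X Ps.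
Proof.
elim: Ps j X => //= P Ps IH j X FG; rewrite FG; last lia.
by apply: IH => i ij; apply: FG; lia.
Qed.

Lemma eq_KDstate rho sigma spec k :
  (forall j, (0 < j <= k)%N -> F j = G j) ->
  KDstate rho F sigma spec k = KDstate rho G sigma spec k.
Proof.
move=> FG; congr (_ *: _); apply: eq_bigr => mu _; congr (_ *: _).
apply: eq_big_seq => s /size_cart; rewrite !size_map -enumT size_enum_ord.
case: s => [|P Ps] // [size_Ps]; congr (_ * mxtrace _); apply: eq_kd_evolve => i.
rewrite size_map => i_lt; apply: FG; lia.
Qed.

End Locality.

Section OperatorBasis.
Variables (C : numClosedFieldType) (d : nat).
Hypothesis d_gt0 : (0 < d)%N.
Variable sigma : 'I_(d * d) -> 'M[C]_d.
Hypothesis sigma_basis : op_basis sigma.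

Let d_neq0 : (d%:R : C) != 0.
Proof. by rewrite pnatr_eq0 -lt0n. Qed.

Let sigma_orth a b : \tr (sigma a *m sigma b) = d%:R * (a == b)%:R.
Proof. by case: sigma_basis. Qed.

(* Orthogonality says S *m T = d, with S the d^2 x d^2 matrix of coordinates of the
   sigma_a and T its transpose; hence T *m S = d as well, which is completeness. *)
Lemma op_basis_complete i j k l :
  \sum_a sigma a j i * sigma a k l = d%:R * ((i == k) && (j == l))%:R.
Proof.
pose S : 'M[C]_(d * d) :=
  \matrix_(a, P) sigma a (mxtens_unindex P).1 (mxtens_unindex P).2.
pose T : 'M[C]_(d * d) :=
  \matrix_(P, a) sigma a (mxtens_unindex P).2 (mxtens_unindex P).1.
have ST : S *m T = (d%:R : C)%:M.
  apply/matrixP => a b; rewrite mxE big_mxtens_index [RHS]mxE.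
  rewrite -(mulr_natr _ (a == b)) -sigma_orth.
  apply: eq_bigr => p _; rewrite mxE; apply: eq_bigr => q _.
  by rewrite !mxE !mxtens_indexK.
have TS : (d%:R^-1 *: T) *m S = 1%:M.
  by apply: mulmx1C; rewrite -scalemxAr ST scale_scalar_mx mulVf.
move/(congr1 (fun M : 'M_(d * d) => M (mxtens_index (i, j)) (mxtens_index (k, l)))): TS.
rewrite /= !mxE (inj_eq (can_inj (@mxtens_indexK d d))) xpair_eqE => <-.
rewrite mulr_sumr; apply: eq_bigr => a _.
by rewrite !mxE !mxtens_indexK /= mulrA mulrA mulfV ?mul1r.
Qed.

Lemma op_basis_expand (A : 'M[C]_d) :
  A = \sum_a (d%:R^-1 * \tr (A *m sigma a)) *: sigma a.
Proof.
apply/matrixP => k l; rewrite summxE.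
transitivity (d%:R^-1 * \sum_a \sum_i \sum_j A i j * (sigma a j i * sigma a k l)); last first.
  rewrite mulr_sumr; apply: eq_bigr => a _; rewrite !mxE -mulrA; congr (_ * _).
  rewrite /mxtrace mulr_suml; apply: eq_bigr => i _.
  by rewrite mxE mulr_suml; apply: eq_bigr => j _; rewrite mulrA.
rewrite exchange_big; under eq_bigr => i _ do rewrite exchange_big.
under eq_bigr => i _ do under eq_bigr => j _ do rewrite -mulr_sumr op_basis_complete.
rewrite (bigD1 k) //= addrC big1 ?add0r => [|i /negbTE ik]; last first.
  by rewrite big1 // => j _; rewrite ik mulr0 mulr0.
rewrite (bigD1 l) //= addrC big1 ?add0r => [|j /negbTE jl]; last first.
  by rewrite jl andbF mulr0 mulr0.
by rewrite !eqxx mulr1 mulrCA mulVf ?mulr1.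
Qed.

Lemma tensmx_tens_basis k nu a :
  sigma a *t tens k (sigma \o nu) = tens k.+1 (sigma \o fun j => if j == k then a else nu j).
Proof. by rewrite /= eqxx; congr (_ *t _); apply: eq_tens => j /ltn_eqF /= ->. Qed.

Lemma tr_tens_basis_inj k (X Y : 'M[C]_(dpow d k)) :
  (forall nu : nat -> 'I_(d * d),
     \tr (X *m tens k (sigma \o nu)) = \tr (Y *m tens k (sigma \o nu))) ->
  X = Y.
Proof.
elim: k X Y => [|k IH] X Y XY.
  have nu0 : nat -> 'I_(d * d) by move=> _; exists 0%N; rewrite muln_gt0 d_gt0.
  move: (XY nu0); rewrite /= !mulmx1 /mxtrace !big_ord1 => XY00.
  by apply/matrixP => i j; rewrite !ord1.
have trE (Z : 'M[C]_(dpow d k.+1)) A B :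
    \tr (Z *m (A *t B)) = \tr (ptrace1 (Z *m (A *t 1%:M)) *m B).
  by rewrite -mxtrace_ptrace1 -mulmxA tensmx_mul mulmx1 mul1mx.
have ptr_sigma a : ptrace1 (X *m (sigma a *t 1%:M)) = ptrace1 (Y *m (sigma a *t 1%:M)).
  by apply: IH => nu; rewrite -!trE tensmx_tens_basis.
have trXY A B : \tr (X *m (A *t B)) = \tr (Y *m (A *t B)).
  rewrite (op_basis_expand A) tensmx_suml !mulmx_sumr !mxtrace_sum; apply: eq_bigr => a _.
  by rewrite tensmxZl -!scalemxAr !mxtraceZ !trE ptr_sigma.
apply/matrixP => P Q.
case: (mxtens_indexP P) => i p; case: (mxtens_indexP Q) => j q.
by rewrite -[LHS]mxtrace_mul_delta -[RHS]mxtrace_mul_delta -tensmx_delta trXY.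
Qed.

Section KDState.
Variables (rho : 'M[C]_d) (E : nat -> 'M[C]_d -> 'M[C]_d).
Variable spec : 'I_(d * d) -> seq (C * 'M[C]_d).
Hypothesis E_linear : forall j, linear (E j).
Hypothesis spec_decomp : forall mu, spectral_decomp (sigma mu) (spec mu).

Local Notation KD := (KDstate rho E sigma spec).

Fixpoint kd_chain (f : nat -> 'M[C]_d) k : 'M[C]_d :=
  if k is k'.+1 then E k (kd_chain f k' *m f k') else rho.

Lemma eq_kd_chain f g k :
  (forall j, (j < k)%N -> f j = g j) -> kd_chain f k = kd_chain g k.
Proof. by elim: k => //= k IH fg; rewrite fg // IH // => j jk; apply/fg/ltnW. Qed.

Lemma kd_evolve_chain f k m :
  kd_evolve E k.+1 (kd_chain f k *m f k) [seq f i | i <- iota k.+1 m]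
  = kd_chain f (k + m)%N *m f (k + m)%N.
Proof. by elim: m k => [|m IH] k /=; rewrite ?addn0 // -addSnnS -IH. Qed.

Lemma QKD_chain f k :
  QKD rho E [seq f i | i <- iota 0 k.+1] = \tr (kd_chain f k *m f k).
Proof. exact: (congr1 mxtrace (kd_evolve_chain f 0 k)). Qed.

Lemma kd_evolve_linear j Ps : linear (kd_evolve E j ^~ Ps).
Proof.
by elim: Ps j => [|P Ps IH] j a X Y //=; rewrite E_linear mulmxDl -scalemxAl IH.
Qed.

Lemma kd_evolve_spectral j X m Ps :
  \sum_(x <- spec m) x.1 *: kd_evolve E j (X *m x.2) Ps
  = kd_evolve E j (X *m sigma m) Ps.
Proof.
have [_ _ _ _ ->] := spec_decomp m; rewrite mulmx_sumr.
under [in RHS]eq_bigr => x _ do rewrite -scalemxAr.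
by rewrite (linear_sumZ (kd_evolve_linear j Ps)).
Qed.

Lemma sum_cart_kd_evolve j X ms :
  \sum_(s <- cart [seq spec m | m <- ms])
     (\prod_(x <- s) x.1) *: kd_evolve E j X [seq x.2 | x <- s]
  = kd_evolve E j X [seq sigma m | m <- ms].
Proof.
elim: ms j X => [|m ms IH] j X /=; first by rewrite big_seq1 big_nil scale1r.
rewrite big_allpairs_dep /= -kd_evolve_spectral; apply: eq_bigr => x _.
by rewrite -IH scaler_sumr; apply: eq_bigr => s _; rewrite big_cons scalerA.
Qed.

Lemma Tcoef_basis ms : Tcoef rho E spec ms = QKD rho E [seq sigma m | m <- ms].
Proof.
case: ms => [|m ms]; first by rewrite /Tcoef big_seq1 big_nil mulr0.
rewrite /Tcoef /= big_allpairs_dep /= -kd_evolve_spectral mxtrace_sum.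
apply: eq_bigr => x _; rewrite -sum_cart_kd_evolve mxtraceZ mxtrace_sum mulr_sumr.
by apply: eq_bigr => s _; rewrite mxtraceZ big_cons mulrA.
Qed.

Lemma KDstate_tr_tens k nu :
  \tr (KD k *m tens k.+1 (sigma \o nu)) = \tr (kd_chain (sigma \o nu) k *m sigma (nu k)).
Proof.
pose mu0 : {ffun 'I_k.+1 -> 'I_(d * d)} := [ffun i : 'I_k.+1 => nu i].
have deltaE (mu : {ffun 'I_k.+1 -> 'I_(d * d)}) :
    \prod_(i < k.+1) \tr (sigma (mu (inord i)) *m sigma (nu i))
    = d%:R ^+ k.+1 * (mu == mu0)%:R.
  under eq_bigr => i _ do rewrite sigma_orth.
  case: (pickP (fun i => mu i != mu0 i)) => [i /= mui | mu_mu0]; last first.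
    have -> : mu = mu0 by apply/ffunP => i; apply/eqP/negbFE/mu_mu0.
    under eq_bigr => i _ do rewrite ffunE inord_val eqxx mulr1.
    by rewrite prodr_const card_ord eqxx mulr1.
  have /negbTE-> : mu != mu0 by apply: contraNneq mui => ->.
  move: mui; rewrite mulr0 (bigD1 i) //= inord_val ffunE => /negbTE->.
  by rewrite mulr0 mul0r.
rewrite /KDstate -scalemxAl mxtraceZ mulmx_suml mxtrace_sum.
under eq_bigr => mu _ do rewrite -scalemxAl mxtraceZ mulmx_tens mxtrace_tens /= deltaE.
rewrite (bigD1 mu0) //= big1 => [|mu /negbTE->]; last by rewrite !mulr0.
rewrite eqxx addr0 mulr1 mulrCA mulVf ?expf_neq0 // mulr1 Tcoef_basis -QKD_chain.
rewrite -map_comp -val_enum_ord -map_comp; congr QKD.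
by apply: eq_map => i /=; rewrite ffunE.
Qed.

Lemma KDstate_tr_tensl k nu A :
  \tr (KD k *m (A *t tens k (sigma \o nu))) = \tr (kd_chain (sigma \o nu) k *m A).
Proof.
rewrite [in LHS](op_basis_expand A) [in RHS](op_basis_expand A) tensmx_suml.
rewrite !mulmx_sumr !mxtrace_sum; apply: eq_bigr => a _.
rewrite tensmxZl -!scalemxAr !mxtraceZ tensmx_tens_basis KDstate_tr_tens /= eqxx.
by congr (_ * mxtrace (_ *m _)); apply: eq_kd_chain => j /ltn_eqF /= ->.
Qed.

Lemma KDstate0 : KD 0 = castmx (esym (muln1 d), esym (muln1 d)) rho.
Proof.
apply: tr_tens_basis_inj => nu.
by rewrite KDstate_tr_tens /= tens_mx_scalar scale1r castmx_mulmx mxtrace_castmx.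
Qed.

Lemma KDstateS k : KD k.+1 = star (jam (E k.+1)) (KD k).
Proof.
apply: tr_tens_basis_inj => nu.
by rewrite KDstate_tr_tens /= (mxtrace_star_jam (E_linear _) (KDstate_tr_tensl k nu)).
Qed.

End KDState.

End OperatorBasis.

Theorem theorem4 (C : numClosedFieldType) (d n : nat) (d_gt0 : (0 < d)%N)
  (rho : 'M[C]_d) (E : nat -> 'M[C]_d -> 'M[C]_d)
  (sigma : 'I_(d * d) -> 'M[C]_d) (spec : 'I_(d * d) -> seq (C * 'M[C]_d)) :
  density rho ->
  (forall j, (1 <= j <= n)%N -> cptp (E j)) ->
  op_basis sigma ->
  (forall mu, spectral_decomp (sigma mu) (spec mu)) ->
  KDstate rho E sigma spec 0 = castmx (esym (muln1 d), esym (muln1 d)) rho /\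
  (forall k, (k < n)%N ->
     KDstate rho E sigma spec k.+1 =
     star (jam (E k.+1)) (KDstate rho E sigma spec k)).
Proof.
move=> _ E_cptp sigma_basis spec_decomp.
(* Only E_1, ..., E_n enter the states up to t_n, so the other maps can be replaced by the
   identity to make every map linear. *)
pose En j := if (0 < j <= n)%N then E j else id.
have En_linear j : linear (En j).
  by rewrite /En; case: ifP => [/E_cptp/cptp_linear | _ a X Y].
have KD_En k : (k <= n)%N -> KDstate rho E sigma spec k = KDstate rho En sigma spec k.
  by move=> kn; apply: eq_KDstate => j /andP[j_gt0 jk]; rewrite /En j_gt0 (leq_trans jk kn).
split; first by rewrite KD_En // KDstate0.
move=> k kn; rewrite !KD_En ?(ltnW kn) // KDstateS //.
by rewrite /En ltn0Sn kn.
Qed.
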